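(* Let $G$ be a weighted graph. Let $F$ be a bipartite graph and let $\mathcal{H}$ be the class of all graphs that are weighted cross-bipartite swapping in $G$. Then every $\mathcal{H}$-blow-up $H$ of $F$ is bipartite swapping in $G$, i.e. $\hom(H,G)^2\le\hom(H\times K_2,G)$.
   Context: A weighted graph $G$ is a symmetric function $G:V(G)\times V(G)\to\mathbb{R}_{\ge0}$ on a finite set (loops allowed). For a graph $H$, $\hom(H,G)=\sum_{\phi:V(H)\to V(G)}\prod_{uv\in E(H)}G(\phi(u),\phi(v))$. The tensor product $H\times K_2$ has vertex set $V(H)\times\{1,2\}$ with $(u,i)\sim(v,j)$ iff $uv\in E(H)$ and $i\ne j$. A graph $H$ is weighted cross-bipartite swapping in $G$ if for all $\mathbf{a},\mathbf{b}:V(G)\to\mathbb{R}_{\ge0}$, \[\Big(\sum_{\phi:V(H)\to V(G)}\prod_{uv\in E(H)}G(\phi(u),\phi(v))\prod_{u}a_{\phi(u)}\Big)\Big(\sum_{\phi:V(H)\to V(G)}\prod_{uv\in E(H)}G(\phi(u),\phi(v))\prod_{u}b_{\phi(u)}\Big)\le \sum_{\psi:V(H)\times\{1,2\}\to V(G)}\prod_{xy\in E(H\times K_2)}G(\psi(x),\psi(y))\prod_{u\in V(H)}a_{\psi(u,1)}b_{\psi(u,2)}.\] For a class $\mathcal{H}$ and a graph $F$ on vertices $v_1,\dots,v_k$, an $\mathcal{H}$-blow-up of $F$ is obtained by choosing $H_1,\dots,H_k\in\mathcal{H}$, taking their disjoint union, and adding all edges between $V(H_i)$ and $V(H_j)$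 whenever $v_iv_j\in E(F)$. *)

From HB Require Import structures.
From mathcomp Require Import all_boot all_order all_algebra.
From mathcomp Require Import reals.
Set Implicit Arguments. Unset Strict Implicit. Unset Printing Implicit Defensive.
Import Order.TTheory GRing.Theory Num.Theory.
Local Open Scope ring_scope.

Record sgraph := SGraph {
  gV : finType;
  gE : rel gV;
  gE_sym : symmetric gE;
  gE_irr : irreflexive gE }.

Definition bipartite (F : sgraph) : Prop :=
  exists c : gV F -> bool, forall u v, gE u v -> c u != c v.

Section Hom.
Variables (R : realType) (W : finType) (w : W -> W -> R).

(* product over the (unordered) edges uv of (T, e) of w(phi u, phi v);
   each edge is counted once, via the ordering of vertices given by enum_rank *)
Definition edge_prod (T : finType) (e : rel T) (phi : T -> W) : R :=
  \prod_(p : T * T | e p.1 p.2 && (enum_rank p.1 < enum_rank p.2)%N)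
     w (phi p.1) (phi p.2).

Definition hom (T : finType) (e : rel T) : R :=
  \sum_(phi : {ffun T -> W}) edge_prod e phi.

Definition homw (T : finType) (e : rel T) (a : W -> R) : R :=
  \sum_(phi : {ffun T -> W}) edge_prod e phi * \prod_(u : T) a (phi u).

(* tensor product H x K_2 on vertex set T * bool (true = copy 1, false = copy 2) *)
Definition tensorK2 (T : finType) (e : rel T) : rel (T * bool) :=
  fun p q => e p.1 q.1 && (p.2 != q.2).

Definition wcb_swapping (T : finType) (e : rel T) : Prop :=
  forall a b : W -> R, (forall x, 0 <= a x) -> (forall x, 0 <= b x) ->
    homw e a * homw e b <=
    \sum_(psi : {ffun T * bool -> W})
       edge_prod (tensorK2 e) psi *
       \prod_(u : T) (a (psi (u, true)) * b (psi (u, false))).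

Definition b_swapping (T : finType) (e : rel T) : Prop :=
  hom e ^+ 2 <= hom (tensorK2 e).

End Hom.

(* The blow-up of F by the family Hs: vertex set is the disjoint union of the
   V(Hs i); edges inside each Hs i, plus all edges between V(Hs i) and V(Hs j)
   whenever ij is an edge of F. *)
Definition blowup_rel (F : sgraph) (Hs : gV F -> sgraph) :
  rel {i : gV F & gV (Hs i)} :=
  fun x y => ((tag x == tag y) && gE (tagged x) (tagged_as x y))
             || gE (tag x) (tag y).

From Pilot Require Import Defs.
From HB Require Import structures.
From mathcomp Require Import all_boot all_order all_algebra.
From mathcomp Require Import reals ring.
Import Order.TTheory GRing.Theory Num.Theory.
Local Open Scope ring_scope.
Set Implicit Arguments. Unset Strict Implicit. Unset Printing Implicit Defensive.

(* Let c be a proper 2-colouring of F, and call the blocks V(H_i) with c i = true the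
   A-blocks, the others the B-blocks.  Every edge of the blow-up H between two blocks joins
   an A-block to a B-block, so once a map f of the B-blocks into G is fixed the A-blocks
   contribute independently:
     hom(H) = sum_f h(f) prod_(i in A) hom_(a_i(f))(H_i),
   where h(f) is the weight of the edges inside the B-blocks and a_i(f)(z) the product of
   w(z, f y) over the vertices y adjacent to block i.  Squaring and applying the swapping
   inequality of each H_i, i in A, turns the product of the two weighted counts into a
   weighted count of H_i x K_2.  Expanding these products as a sum over maps of the doubled
   A-blocks, the B-blocks decouple in turn, and the swapping inequality of the H_j, j in B,
   bounds the result by hom(H x K_2). *)

Lemma symmetric_tensorK2 (T : finType) (e : rel T) :
  symmetric e -> symmetric (tensorK2 e).
Proof. by move=> e_sym p q; rewrite /tensorK2 e_sym eq_sym. Qed.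

Lemma irreflexive_tensorK2 (T : finType) (e : rel T) : irreflexive (tensorK2 e).
Proof. by move=> p; rewrite /tensorK2 eqxx andbF. Qed.

Lemma big_pair (R : Type) (idx : R) (op : Monoid.com_law idx) (A B : finType)
    (F : A * B -> R) :
  \big[op/idx]_(q : A * B) F q = \big[op/idx]_a \big[op/idx]_b F (a, b).
Proof. by rewrite pair_bigA; apply: eq_bigr => -[]. Qed.

Section EdgeProduct.
Variables (R : realType) (W : finType) (w : W -> W -> R).
Hypothesis w_sym : forall x y, w x y = w y x.
Hypothesis w_ge0 : forall x y, 0 <= w x y.

Lemma eq_edge_prod (T : finType) (e : rel T) (f g : T -> W) :
  f =1 g -> edge_prod w e f = edge_prod w e g.
Proof. by move=> fg; apply: eq_bigr => p _; rewrite !fg. Qed.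

Lemma edge_prod_ge0 (T : finType) (e : rel T) (f : T -> W) : 0 <= edge_prod w e f.
Proof. exact: prodr_ge0. Qed.

Lemma homw_ge0 (T : finType) (e : rel T) (a : W -> R) :
  (forall z, 0 <= a z) -> 0 <= homw w e a.
Proof.
by move=> a_ge0; apply: sumr_ge0 => f _; rewrite mulr_ge0 ?edge_prod_ge0 ?prodr_ge0.
Qed.

Lemma edge_prod_sqr (T : finType) (e : rel T) (f : T -> W) :
  symmetric e -> irreflexive e ->
  edge_prod w e f ^+ 2 = \prod_(p : T * T | e p.1 p.2) w (f p.1) (f p.2).
Proof.
move=> e_sym e_irr.
rewrite (bigID (fun p : T * T => (enum_rank p.1 < enum_rank p.2)%N)) /= expr2.
congr (_ * _); rewrite (reindex (fun p : T * T => (p.2, p.1))) /=; last first.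
  by exists (fun p : T * T => (p.2, p.1)) => -[].
apply: eq_big => [[x y]|[x y] _] /=; last by rewrite w_sym.
rewrite -leqNgt [e y x]e_sym ltn_neqAle; case exy: (e x y) => //=.
by case: eqP => //= /val_inj /enum_rank_inj eq_xy; rewrite eq_xy e_irr in exy.
Qed.

Lemma hom_card0 (T : finType) (e : rel T) : #|T| = 0%N -> Defs.hom w e = 1.
Proof.
move=> T0; rewrite /Defs.hom (eq_bigr (fun _ => 1)) => [|f _].
  by rewrite sumr_const card_ffun T0.
by rewrite /edge_prod big_pred0 // => p; have := card0_eq T0 p.1.
Qed.

Lemma b_swapping_card0 (T : finType) (e : rel T) : #|W| = 0%N -> b_swapping w e.
Proof.
move=> W0; case: (posnP #|T|) => [T0|/card_gt0P[x _]].
  by rewrite /b_swapping !hom_card0 ?card_prod ?T0 ?expr1n.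
rewrite /b_swapping /Defs.hom big_pred0 => [|f]; last by have := card0_eq W0 (f x).
by rewrite expr0n sumr_ge0 // => f _; apply: edge_prod_ge0.
Qed.

Definition homwK2 (T : finType) (e : rel T) (a b : W -> R) : R :=
  \sum_(psi : {ffun T * bool -> W}) edge_prod w (tensorK2 e) psi *
     \prod_(u : T) (a (psi (u, true)) * b (psi (u, false))).

End EdgeProduct.

Section Blocks.
Variables (I S : finType) (blk : S -> I) (L : I -> finType) (emb : forall i, L i -> S).
Arguments emb : clear implicits.
Hypothesis emb_inj : forall i, injective (emb i).
Hypothesis blk_emb : forall i u, blk (emb i u) = i.
Hypothesis emb_surj : forall i x, blk x = i -> exists u, emb i u = x.

Lemma big_blocks (R : Type) (idx : R) (op : Monoid.com_law idx)
    (P : pred I) (g : S -> R) :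
  \big[op/idx]_(x | P (blk x)) g x = \big[op/idx]_(i | P i) \big[op/idx]_(u : L i) g (emb i u).
Proof.
rewrite (partition_big blk P) //=; apply: eq_bigr => i Pi.
rewrite -[RHS](big_imset _ (in2W (@emb_inj i))) /=.
apply: eq_bigl => x; apply/andP/imsetP => [[_ /eqP /emb_surj[u <-]]|[u _ ->]].
  by exists u.
by rewrite blk_emb eqxx Pi.
Qed.

Variables (W : finType) (w0 : W).

(* A map defined on the blocks in P only is encoded as a map equal to the dummy value w0
   elsewhere. *)
Definition supported (P : pred I) (f : {ffun S -> W}) :=
  [forall x, ~~ P (blk x) ==> (f x == w0)].

Definition restr i (f : {ffun S -> W}) : {ffun L i -> W} := [ffun u => f (emb i u)].

Definition merge (P : pred I) (f1 f2 : {ffun S -> W}) : {ffun S -> W} :=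
  [ffun x => if P (blk x) then f1 x else f2 x].

Definition extend i (g : {ffun L i -> W}) : {ffun S -> W} :=
  [ffun x => if [pick u | emb i u == x] is Some u then g u else w0].

Lemma restr_extend i : cancel (@extend i) (restr i).
Proof.
move=> g; apply/ffunP => u; rewrite !ffunE; case: pickP => [v /eqP /emb_inj -> //|].
by move/(_ u); rewrite eqxx.
Qed.

Lemma extend_restr i f : (extend (restr i f) == f) = supported (pred1 i) f.
Proof.
apply/eqP/forallP => [<- x|f_supp].
  apply/implyP; rewrite ffunE; case: pickP => [u /eqP <-|//].
  by rewrite /= blk_emb eqxx.
apply/ffunP => x; rewrite !ffunE; case: pickP => [u /eqP <-|no_u]; first by rewrite ffunE.
have /implyP := f_supp x; case: (blk x =P i) => [/emb_surj[u eu]|/eqP nbx /(_ nbx) /eqP //].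
by have := no_u u; rewrite eu eqxx.
Qed.

Lemma restr_merge (P : pred I) f1 f2 i :
  restr i (merge P f1 f2) = if P i then restr i f1 else restr i f2.
Proof. by apply/ffunP => u; case: ifP => Pi; rewrite !ffunE blk_emb Pi. Qed.

Section Sums.
Variable R : comPzSemiRingType.

Lemma sum_restr i (G : {ffun L i -> W} -> R) :
  \sum_g G g = \sum_(f | supported (pred1 i) f) G (restr i f).
Proof.
rewrite (reindex_onto (@restr i) (@extend i)) /=; last by move=> g _; rewrite restr_extend.
by apply: eq_bigl => f; rewrite extend_restr.
Qed.

Lemma sum_supported_prod (P : pred I) (G : forall i, {ffun L i -> W} -> R) :
  \sum_(f | supported P f) \prod_(i | P i) G i (restr i f) =
  \prod_(i | P i) \sum_g G i g.
Proof.
(* Expand the product of sums into a sum over families of maps, one per block, then glue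
   each family into a single map on S. *)
under [RHS]eq_bigr => i _ do rewrite sum_restr.
rewrite (big_distr_big_dep [ffun => w0]) /=.
pose cut (f : {ffun S -> W}) : {ffun I -> {ffun S -> W}} :=
  [ffun i => if P i then [ffun x => if blk x == i then f x else w0] else [ffun => w0]].
pose glue (F : {ffun I -> {ffun S -> W}}) : {ffun S -> W} := [ffun x => F (blk x) x].
rewrite (reindex_onto cut glue) /=; last first.
  move=> F /pfamilyP [F_dflt F_supp]; apply/ffunP => i; rewrite ffunE.
  case: ifP => Pi; last first.
    apply/eqP; apply: contraFT Pi => FiN.
    by have := subsetP F_dflt i; rewrite inE eq_sym => /(_ FiN).
  apply/ffunP => x; rewrite !ffunE; case: eqP => [<- //|/eqP bx].
  by have /forallP/(_ x) := F_supp i Pi; rewrite bx => /eqP.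
apply: eq_big => [f|f _]; last first.
  apply: eq_bigr => i Pi; congr (G i _).
  by apply/ffunP => u; rewrite !ffunE Pi ffunE blk_emb eqxx.
apply/forallP/andP => [f_supp|[_ /eqP <-] x]; last first.
  by rewrite !ffunE; case: ifP => //= _; rewrite ffunE.
split.
  apply/pfamilyP; split.
    by apply/subsetP => i; rewrite !inE ffunE; case: ifP => //; rewrite eqxx.
  move=> i Pi; apply/forallP => x; rewrite /= ffunE ifT // ffunE.
  by case: (blk x =P i) => //= _; rewrite eqxx.
apply/eqP/ffunP => x; rewrite !ffunE; case: ifP => [_|nP]; first by rewrite ffunE eqxx.
by have := f_supp x; rewrite nP ffunE => /eqP.
Qed.

Lemma sum_merge (P : pred I) (G : {ffun S -> W} -> R) :
  \sum_f G f = \sum_(f2 | supported (predC P) f2) \sum_(f1 | supported P f1) G (merge P f1 f2).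
Proof.
rewrite pair_big_dep /=.
pose mask (Q : pred I) (f : {ffun S -> W}) := [ffun x => if Q (blk x) then f x else w0].
rewrite (reindex_onto (fun p : {ffun S -> W} * {ffun S -> W} => merge P p.2 p.1)
   (fun f => (mask (predC P) f, mask P f))) /=; last first.
  by move=> f _; apply/ffunP => x; rewrite !ffunE /=; case: (P (blk x)).
apply: eq_bigl => -[f2 f1] /=.
apply/eqP/andP => [[<- <-]|[/forallP f2_supp /forallP f1_supp]].
  by split; apply/forallP => x; rewrite /= !ffunE /=; case: (P (blk x)) => //=; rewrite ?eqxx.
congr (_, _); apply/ffunP => x; rewrite !ffunE /=.
  by have := f2_supp x; rewrite /= negbK; case: (P (blk x)) => //= /eqP ->.
by have := f1_supp x; case: (P (blk x)) => //= /eqP ->.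
Qed.

End Sums.

Section Edges.
Variables (R : realType) (w : W -> W -> R).
Hypothesis w_sym : forall x y, w x y = w y x.
Hypothesis w_ge0 : forall x y, 0 <= w x y.
Variables (e : rel S) (eL : forall i, rel (L i)) (c : I -> bool).
Arguments eL : clear implicits.
Hypothesis e_sym : symmetric e.
Hypothesis e_irr : irreflexive e.
Hypothesis e_emb : forall i u v, e (emb i u) (emb i v) = eL i u v.
Hypothesis e_across : forall x y, e x y -> blk x != blk y -> c (blk x) != c (blk y).

Lemma edge_prod_blocks (f : S -> W) :
  edge_prod w e f =
  \prod_i edge_prod w (eL i) (fun u => f (emb i u)) *
  \prod_(x | c (blk x)) \prod_(y | e x y && (blk x != blk y)) w (f x) (f y).
Proof.
have eL_sym i : symmetric (eL i) by move=> u v; rewrite -!e_emb e_sym.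
have eL_irr i : irreflexive (eL i) by move=> u; rewrite -e_emb e_irr.
(* Compare squares: squared edge products run over ordered pairs, which the blocks simply
   partition. *)
apply/eqP; rewrite -(eqrXn2 (n := 2)) ?edge_prod_ge0 //; last first.
  by apply: mulr_ge0; apply: prodr_ge0 => *; rewrite ?edge_prod_ge0 ?prodr_ge0.
rewrite edge_prod_sqr // exprMn -prodrXl pair_big_dep /=.
under [X in X * _]eq_bigr => i _ do rewrite edge_prod_sqr //.
apply/eqP; rewrite (bigID (fun p : S * S => blk p.1 == blk p.2)) /=; congr (_ * _).
  rewrite (partition_big (fun p : S * S => blk p.1) predT) //=; apply: eq_bigr => i _.
  transitivity (\prod_(p in [set (emb i q.1, emb i q.2) | q in [pred q | eL i q.1 q.2]])
      w (f p.1) (f p.2)).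
    apply: eq_bigl => -[x y] /=; apply/idP/imsetP => [|[[u v] euv [-> ->]]]; last first.
      by rewrite e_emb; move: euv; rewrite inE => ->; rewrite !blk_emb eqxx.
    case/andP=> /andP[exy /eqP bxy] /eqP /[dup] bx /emb_surj[u eu].
    have [v ev] := emb_surj (etrans (esym bxy) bx).
    by exists (u, v); rewrite /= ?eu ?ev // unfold_in /= -e_emb eu ev.
  rewrite big_imset /=; last by move=> [u1 v1] [u2 v2] _ _ [/emb_inj -> /emb_inj ->].
  by apply: eq_bigl => q; rewrite inE.
(* A pair leaving a block with colour false is the reverse of one leaving a block with colour
   true. *)
rewrite (bigID (fun p : S * S => c (blk p.1))) /= expr2; congr (_ * _).
  by apply: eq_bigl => p; rewrite andbC andbA.
rewrite (reindex (fun p : S * S => (p.2, p.1))) /=; last first.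
  by exists (fun p : S * S => (p.2, p.1)) => -[].
apply: eq_big => [[x y]|[x y] _] /=; last by rewrite w_sym.
rewrite [e y x]e_sym eq_sym; case exy: (e x y); rewrite ?andbF //=.
case bxy: (blk x != blk y); rewrite ?andbF ?andbT //=.
by case: (c (blk x)) (c (blk y)) (e_across exy bxy) => -[].
Qed.

End Edges.
End Blocks.

Section BlowUp.
Variables (R : realType) (W : finType) (w : W -> W -> R).
Hypothesis w_sym : forall x y, w x y = w y x.
Hypothesis w_ge0 : forall x y, 0 <= w x y.
Variables (F : sgraph) (Hs : gV F -> sgraph) (c : gV F -> bool).
Hypothesis c_proper : forall i j, gE i j -> c i != c j.

Local Notation I := (gV F).
Local Notation T := {i : I & gV (Hs i)}.
Local Notation E i := (@gE (Hs i)).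
Local Notation eH := (@blowup_rel F Hs).

Lemma colour_adj i j : gE i j -> c j = ~~ c i.
Proof. by move/c_proper; case: (c i); case: (c j). Qed.

Lemma blowup_sym : symmetric eH.
Proof.
move=> [i u] [j v]; rewrite /blowup_rel /= eq_sym [gE j i]gE_sym.
by case: (j =P i) => //= ji; subst j; rewrite !tagged_asE gE_sym.
Qed.

Lemma blowup_irr : irreflexive eH.
Proof. by move=> [i u]; rewrite /blowup_rel /= eqxx tagged_asE !gE_irr. Qed.

Definition vtx i (u : gV (Hs i)) : T := Tagged (fun i => gV (Hs i)) u.
Definition vtx2 i (q : gV (Hs i) * bool) : T * bool := (vtx q.1, q.2).
Definition block2 (x : T * bool) : I := tag x.1.

Lemma blowup_vtx i (u v : gV (Hs i)) : eH (vtx u) (vtx v) = gE u v.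
Proof. by rewrite /blowup_rel /= eqxx tagged_asE gE_irr orbF. Qed.

Lemma blowup_across (x y : T) : tag x != tag y -> eH x y = gE (tag x) (tag y).
Proof. by rewrite /blowup_rel => /negbTE ->. Qed.

Local Notation tag_vtx := (fun i u => erefl : tag (@vtx i u) = i).
Local Notation block2_vtx2 := (fun i q => erefl : block2 (@vtx2 i q) = i).

Lemma vtx_inj i : injective (@vtx i).
Proof. by move=> u v /(congr1 (tagged_as (vtx u))); rewrite !tagged_asE. Qed.

Lemma vtx2_inj i : injective (@vtx2 i).
Proof. by move=> [u s] [v t] [/vtx_inj -> ->]. Qed.

Lemma vtx_surj i (x : T) : tag x = i -> exists u : gV (Hs i), vtx u = x.
Proof. by case: x => j u /= <-; exists u. Qed.

Lemma vtx2_surj i (x : T * bool) : block2 x = i -> exists q : gV (Hs i) * bool, vtx2 q = x.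
Proof. by case: x => -[j u] s /= <-; exists (u, s). Qed.

Lemma edge_prod_blowup (f : {ffun T -> W}) :
  edge_prod w eH f =
  \prod_i edge_prod w (E i) (restr vtx i f) *
  \prod_(i | c i) \prod_(u : gV (Hs i)) \prod_(y : T | gE i (tag y)) w (f (vtx u)) (f y).
Proof.
have across x y : eH x y -> tag x != tag y -> c (tag x) != c (tag y).
  by move=> exy /blowup_across eq_e; apply: c_proper; rewrite -eq_e.
rewrite (edge_prod_blocks vtx_inj tag_vtx vtx_surj
  w_sym w_ge0 blowup_sym blowup_irr blowup_vtx across f).
congr (_ * _).
  by apply: eq_bigr => i _; apply: eq_edge_prod => u; rewrite ffunE.
rewrite (big_blocks vtx_inj tag_vtx vtx_surj).
apply: eq_bigr => i _; apply: eq_bigr => u _; apply: eq_bigl => y /=.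
case: (tag y =P i) => [->|/eqP yi]; first by rewrite gE_irr eqxx andbF.
by rewrite eq_sym yi andbT blowup_across // eq_sym.
Qed.

Lemma edge_prod_tensor_blowup (f : {ffun T * bool -> W}) :
  edge_prod w (tensorK2 eH) f =
  \prod_i edge_prod w (tensorK2 (E i)) (restr vtx2 i f) *
  \prod_(y | ~~ c (block2 y)) \prod_(i | c i && gE i (block2 y))
     \prod_(u : gV (Hs i)) w (f (vtx2 (u, ~~ y.2))) (f y).
Proof.
have across x y : tensorK2 eH x y -> block2 x != block2 y -> c (block2 x) != c (block2 y).
  by move=> /andP[exy _] /blowup_across eq_e; apply: c_proper; rewrite -eq_e.
have tensor_vtx2 i (p q : gV (Hs i) * bool) :
    tensorK2 eH (vtx2 p) (vtx2 q) = tensorK2 (E i) p q.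
  by rewrite /tensorK2 /= blowup_vtx.
rewrite (edge_prod_blocks vtx2_inj block2_vtx2 vtx2_surj
  w_sym w_ge0 (symmetric_tensorK2 blowup_sym) (@irreflexive_tensorK2 _ eH) tensor_vtx2 across f).
congr (_ * _).
  by apply: eq_bigr => i _; apply: eq_edge_prod => q; rewrite ffunE.
rewrite (exchange_big_dep (fun y => ~~ c (block2 y))) /=; last first.
  by move=> x y cx /andP[/across/[apply]]; rewrite cx; case: (c _).
apply: eq_bigr => y _.
rewrite (eq_bigl (fun x => (c (block2 x) && gE (block2 x) (block2 y)) && (x.2 != y.2))); last first.
  move=> x; case: (block2 x =P block2 y) => [->|/eqP xy]; first by rewrite gE_irr !andbF.
  by rewrite /tensorK2 blowup_across //= andbT andbA.
rewrite big_mkcondr (big_blocks vtx2_inj block2_vtx2 vtx2_surj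
  _ (fun i => c i && gE i (block2 y))).
apply: eq_bigr => i _.
rewrite big_pair; apply: eq_bigr => u _.
by rewrite big_bool; case: (y.2); rewrite /= ?mulr1 ?mul1r.
Qed.

Variable w0 : W.
Local Notation supportedT := (supported (@tag I (fun i => gV (Hs i))) w0).
Local Notation supported2 := (supported block2 w0).

Definition adj_weight i (f : T -> W) (z : W) : R := \prod_(y : T | gE i (tag y)) w z (f y).

Definition edge_prodB (f : {ffun T -> W}) : R :=
  \prod_(j | ~~ c j) edge_prod w (E j) (restr vtx j f).

Lemma hom_blowup :
  Defs.hom w eH = \sum_(fB | supportedT (predC c) fB)
    edge_prodB fB * \prod_(i | c i) homw w (E i) (adj_weight i fB).
Proof.
rewrite /Defs.hom (sum_merge (@tag I _) w0 c); apply: eq_bigr => fB _.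
rewrite /homw -(sum_supported_prod vtx_inj tag_vtx vtx_surj
  w0 c (fun i g => edge_prod w (E i) g * \prod_u adj_weight i fB (g u))) mulr_sumr.
apply: eq_bigr => fA _; rewrite edge_prod_blowup (bigID c) /= big_split /= -/(edge_prodB _).
rewrite [edge_prodB _](_ : _ = edge_prodB fB); last first.
  by apply: eq_bigr => j /negbTE cj; rewrite (restr_merge tag_vtx) cj.
rewrite mulrAC [_ * edge_prodB fB]mulrC; congr (_ * (_ * _)).
  by apply: eq_bigr => i ci; rewrite (restr_merge tag_vtx) ci.
apply: eq_bigr => i ci; apply: eq_bigr => u _; apply: eq_bigr => y iy.
by rewrite !ffunE /= ci (colour_adj iy) ci.
Qed.

Definition edge_prodA2 (PA : {ffun T * bool -> W}) : R :=
  \prod_(i | c i) edge_prod w (tensorK2 (E i)) (restr vtx2 i PA).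

Definition adj_weight2 j (PA : {ffun T * bool -> W}) (s : bool) (z : W) : R :=
  \prod_(i | c i && gE i j) \prod_(u : gV (Hs i)) w (PA (vtx2 (u, s))) z.

Lemma hom_tensor_blowup :
  Defs.hom w (tensorK2 eH) = \sum_(PA | supported2 c PA) edge_prodA2 PA *
    \prod_(j | ~~ c j) homwK2 w (E j) (adj_weight2 j PA false) (adj_weight2 j PA true).
Proof.
rewrite /Defs.hom (sum_merge block2 w0 c) exchange_big /=; apply: eq_bigr => PA _.
rewrite -(sum_supported_prod vtx2_inj block2_vtx2 vtx2_surj w0 (predC c)
  (fun j g => edge_prod w (tensorK2 (E j)) g *
     \prod_v (adj_weight2 j PA false (g (v, true)) * adj_weight2 j PA true (g (v, false))))).
rewrite mulr_sumr; apply: eq_bigr => PB _.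
rewrite edge_prod_tensor_blowup (bigID c) /= big_split /= -!mulrA; congr (_ * _).
  by apply: eq_bigr => i ci; rewrite (restr_merge block2_vtx2) ci.
congr (_ * _).
  by apply: eq_bigr => j /negbTE cj; rewrite (restr_merge block2_vtx2) cj.
rewrite (big_blocks vtx2_inj block2_vtx2 vtx2_surj _ (fun j => ~~ c j)).
apply: eq_bigr => j /negbTE cj; rewrite big_pair; apply: eq_bigr => v _; rewrite big_bool /=.
by congr (_ * _); apply: eq_bigr => i /andP[ci _]; apply: eq_bigr => u _; rewrite !ffunE /= ci cj.
Qed.

Definition cross_weight (s : bool) (PA : {ffun T * bool -> W}) (fB : {ffun T -> W}) : R :=
  \prod_(i | c i) \prod_(u : gV (Hs i)) adj_weight i fB (PA (vtx2 (u, s))).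

Lemma prod_homwK2_blowup (fB fB' : {ffun T -> W}) :
  \prod_(i | c i) homwK2 w (E i) (adj_weight i fB) (adj_weight i fB') =
  \sum_(PA | supported2 c PA)
    edge_prodA2 PA * (cross_weight true PA fB * cross_weight false PA fB').
Proof.
rewrite -(sum_supported_prod vtx2_inj block2_vtx2 vtx2_surj w0 c
  (fun i g => edge_prod w (tensorK2 (E i)) g *
     \prod_u (adj_weight i fB (g (u, true)) * adj_weight i fB' (g (u, false))))).
apply: eq_bigr => PA _; rewrite big_split /=; congr (_ * _).
rewrite /cross_weight -big_split; apply: eq_bigr => i _; rewrite -big_split.
by apply: eq_bigr => u _; rewrite !ffunE.
Qed.

Lemma sum_cross_weight s (PA : {ffun T * bool -> W}) :
  \sum_(fB | supportedT (predC c) fB) edge_prodB fB * cross_weight s PA fB =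
  \prod_(j | ~~ c j) homw w (E j) (adj_weight2 j PA s).
Proof.
rewrite /homw -(sum_supported_prod vtx_inj tag_vtx vtx_surj w0 (predC c)
  (fun j g => edge_prod w (E j) g * \prod_v adj_weight2 j PA s (g v))).
apply: eq_bigr => fB _; rewrite big_split /=; congr (_ * _).
rewrite /cross_weight /adj_weight /adj_weight2.
under eq_bigr => i _ do rewrite exchange_big /=.
rewrite (exchange_big_dep (fun y : T => ~~ c (tag y))) /=; last first.
  by move=> i y ci /colour_adj ->; rewrite ci.
rewrite (big_blocks vtx_inj tag_vtx vtx_surj _ (fun j => ~~ c j)).
by apply: eq_bigr => j _; apply: eq_bigr => v _; rewrite ffunE.
Qed.

Lemma adj_weight_ge0 i f z : 0 <= adj_weight i f z.
Proof. exact: prodr_ge0. Qed.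

Lemma adj_weight2_ge0 j PA s z : 0 <= adj_weight2 j PA s z.
Proof. by apply: prodr_ge0 => i _; apply: prodr_ge0. Qed.

Hypothesis Hs_swap : forall i, wcb_swapping w (E i).

(* The bound on hom(H)^2 obtained by swapping the A-blocks only. *)
Definition hom_swapA : R :=
  \sum_(fB | supportedT (predC c) fB) \sum_(fB' | supportedT (predC c) fB')
    edge_prodB fB * edge_prodB fB' *
    \prod_(i | c i) homwK2 w (E i) (adj_weight i fB) (adj_weight i fB').

Lemma hom_blowup_sqr_le : Defs.hom w eH ^+ 2 <= hom_swapA.
Proof.
rewrite hom_blowup expr2 mulr_suml; apply: ler_sum => fB _.
rewrite mulr_sumr; apply: ler_sum => fB' _; rewrite mulrACA.
apply: ler_wpM2l; first by rewrite mulr_ge0 // prodr_ge0 // => *; apply: edge_prod_ge0.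
rewrite -big_split; apply: ler_prod => i _; apply/andP; split.
  by rewrite mulr_ge0 // homw_ge0 // => z; apply: adj_weight_ge0.
by apply: Hs_swap => z; apply: adj_weight_ge0.
Qed.

Lemma hom_swapA_le : hom_swapA <= Defs.hom w (tensorK2 eH).
Proof.
rewrite hom_tensor_blowup.
have -> : hom_swapA = \sum_(PA | supported2 c PA) edge_prodA2 PA *
    (\prod_(j | ~~ c j) homw w (E j) (adj_weight2 j PA true) *
     \prod_(j | ~~ c j) homw w (E j) (adj_weight2 j PA false)).
  rewrite /hom_swapA.
  under eq_bigr => fB _ do under eq_bigr => fB' _ do rewrite prod_homwK2_blowup mulr_sumr.
  under eq_bigr => fB _ do rewrite exchange_big /=.
  rewrite exchange_big /=; apply: eq_bigr => PA _.
  rewrite -!sum_cross_weight big_distrlr mulr_sumr; apply: eq_bigr => fB _.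
  by rewrite mulr_sumr; apply: eq_bigr => fB' _; rewrite /=; ring.
apply: ler_sum => PA _; rewrite -big_split /=.
apply: ler_wpM2l; first by apply: prodr_ge0 => i _; apply: edge_prod_ge0.
apply: ler_prod => j _; apply/andP; split.
  by rewrite mulr_ge0 // homw_ge0 // => z; apply: adj_weight2_ge0.
by rewrite mulrC; apply: Hs_swap => z; apply: adj_weight2_ge0.
Qed.

Lemma blowup_b_swapping : b_swapping w eH.
Proof. exact: le_trans hom_blowup_sqr_le hom_swapA_le. Qed.

End BlowUp.

Theorem theorem5p4 (R : realType) (W : finType) (w : W -> W -> R)
    (w_sym : forall x y, w x y = w y x) (w_ge0 : forall x y, 0 <= w x y)
    (F : sgraph) (F_bip : bipartite F)
    (Hs : gV F -> sgraph)
    (Hs_swap : forall i, wcb_swapping w (@gE (Hs i))) :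
  b_swapping w (@blowup_rel F Hs).
Proof.
case: F_bip => c c_proper.
case: (posnP #|W|) => [W0|/card_gt0P[w0 _]]; first exact: b_swapping_card0.
exact: (blowup_b_swapping w_sym w_ge0 c_proper w0 Hs_swap).
Qed.
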